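(* Let $0\le\tau\le\varepsilon$, $\lambda:=\tau/\varepsilon$, $u_n\in\mathcal V_{[0,1]}$, and suppose $u_{n+1}\in\mathcal V$ and $\beta_{n+1}\in\mathcal B(u_{n+1})$ satisfy \[ u_{n+1} -e^{-\tau\Delta}u_n-\lambda u_{n+1}+\lambda\overline{u_{n+1}}\mathbf{1} =\lambda\beta_{n+1} -\lambda\overline{\beta_{n+1}}\mathbf{1}. \] Then $u_{n+1}$ is a minimiser of \[ \lambda\langle u,\mathbf{1} -u \rangle_{\mathcal V} + \|u-e^{-\tau\Delta}u_n\|^2_{\mathcal V} \] over $\{u\in\mathcal V_{[0,1]}:\mathcal M(u)=\mathcal M(u_n)\}$; on this set this objective equals $(1-\lambda)\|u\|^2_{\mathcal V}-2\langle u,e^{-\tau\Delta}u_n\rangle_{\mathcal V}$ plus a constant independent of $u$. In particular, when $\tau=\varepsilon$, $u_{n+1}$ maximises $\langle u,e^{-\tau\Delta}u_n\rangle_{\mathcal V}$ over $\{u\in\mathcal V_{[0,1]}:\mathcal M(u)=\mathcal M(u_n)\}$, i.e. $u_{n+1}$ is an update of the mass-conserving graph MBO scheme.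
   Context: $G=(V,E)$ is a finite, simple, connected, undirected graph with weights $\omega_{ij}=\omega_{ji}>0$ for $ij\in E$, $\omega_{ij}=0$ otherwise; $d_i=\sum_j\omega_{ij}$, $r\in[0,1]$ fixed. $\mathcal V$ = functions $V\to\mathbb R$ with $\langle u,v\rangle_{\mathcal V}=\sum_i u_iv_id_i^r$ and norm $\|\cdot\|_{\mathcal V}$; $\mathcal V_X$ = functions $V\to X$. $(\Delta u)_i=d_i^{-r}\sum_j\omega_{ij}(u_i-u_j)$; $e^{-\tau\Delta}$ is the matrix exponential. $\mathbf 1$ all-ones; $\mathcal M(u)=\langle u,\mathbf 1\rangle_{\mathcal V}$; $\bar v=\mathcal M(v)/\mathcal M(\mathbf 1)$. $\varepsilon>0$. For $u\in\mathcal V_{[0,1]}$, $\mathcal B(u)$ = set of $\beta\in\mathcal V$ with $\beta_i\ge0$ if $u_i=0$, $\beta_i=0$ if $0<u_i<1$, $\beta_i\le0$ if $u_i=1$; $\mathcal B(u)=\emptyset$ otherwise. The mass-conserving graph MBO scheme is defined by $u_{n+1}\in\operatorname{argmin}\{\langle\mathbf 1-2e^{-\tau\Delta}u_n,u\rangle_{\mathcal V}: u\in\mathcal V_{[0,1]},\ \mathcal M(u)=\mathcal M(u_n)\}$. *)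

From HB Require Import structures.
From mathcomp Require Import all_boot all_order all_algebra.
From mathcomp Require Import all_classical all_reals all_analysis.
Set Implicit Arguments. Unset Strict Implicit. Unset Printing Implicit Defensive.
Import Order.TTheory GRing.Theory Num.Theory.
Local Open Scope ring_scope.

Definition weighted_graph (R : realType) (n : nat) (w : 'M[R]_n) : Prop :=
  (forall i j, w i j = w j i) /\ (forall i j, 0 <= w i j) /\ (forall i, w i i = 0)
  /\ (forall i j, connect (fun a b => 0 < w a b) i j).

Definition deg (R : realType) n (w : 'M[R]_n) (i : 'I_n) : R := \sum_j w i j.

(* the graph Laplacian as a matrix: (Delta u)_i = d_i^{-r} sum_j w_ij (u_i - u_j) *)
Definition laplacian (R : realType) n (w : 'M[R]_n) (r : R) : 'M[R]_n :=
  \matrix_(i, j) ((deg w i `^ r)^-1 * ((i == j)%:R * deg w i - w i j)).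

Definition expmx (R : realType) n (A : 'M[R]_n) : 'M[R]_n :=
  limn (series (fun k : nat => (k`!%:R)^-1 *: A ^+ k)).

Definition heat (R : realType) n (w : 'M[R]_n) (r tau : R) (u : 'I_n -> R) : 'I_n -> R :=
  fun i => \sum_j expmx (- tau *: laplacian w r) i j * u j.

Definition ip (R : realType) n (w : 'M[R]_n) (r : R) (u v : 'I_n -> R) : R :=
  \sum_i u i * v i * deg w i `^ r.

Definition sqnorm (R : realType) n (w : 'M[R]_n) (r : R) (u : 'I_n -> R) : R := ip w r u u.

Definition one_fn (R : realType) n : 'I_n -> R := fun _ => 1.

Definition mass (R : realType) n (w : 'M[R]_n) (r : R) (u : 'I_n -> R) : R :=
  ip w r u (@one_fn R n).

Definition bar (R : realType) n (w : 'M[R]_n) (r : R) (u : 'I_n -> R) : R :=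
  mass w r u / mass w r (@one_fn R n).

Definition in01 (R : realType) n (u : 'I_n -> R) : Prop := forall i, 0 <= u i <= 1.

Definition inB (R : realType) n (u beta : 'I_n -> R) : Prop :=
  in01 u /\ forall i, (u i = 0 -> 0 <= beta i) /\ (0 < u i < 1 -> beta i = 0)
                      /\ (u i = 1 -> beta i <= 0).

Definition admissible (R : realType) n (w : 'M[R]_n) (r : R) (u0 u : 'I_n -> R) : Prop :=
  in01 u /\ mass w r u = mass w r u0.

Definition MBO_update (R : realType) n (w : 'M[R]_n) (r tau : R) (un u' : 'I_n -> R) : Prop :=
  admissible w r un u' /\
  forall u, admissible w r un u ->
    ip w r (fun i => 1 - 2 * heat w r tau un i) u' <= ip w r (fun i => 1 - 2 * heat w r tau un i) u.

From HB Require Import structures.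
From mathcomp Require Import all_boot all_order all_algebra.
From mathcomp Require Import all_classical all_reals all_analysis.
From mathcomp Require Import ring lra.

(* The update equation is the optimality condition of the energy on the
   mass-constrained box: substituting it, the energy of a competitor u exceeds
   that of u_{n+1} by (1-λ)‖u-u_{n+1}‖² + 2λ⟨β, u-u_{n+1}⟩ plus a multiple of the
   mass difference.  The first term is nonnegative as λ ≤ 1, the second because β
   lies in the normal cone of [0,1] at u_{n+1}, and the third vanishes.  Summing
   the equation shows that u_{n+1} has the mass of e^{-τΔ}u_n, which is that of
   u_n since the vertex weights d^r are a left null vector of Δ, hence are fixed
   by e^{-τΔ}.  For λ = 1 the quadratic part of the energy cancels, leaving
   -2⟨u, e^{-τΔ}u_n⟩ plus a constant: the MBO objective on the admissible set. *)

Set Implicit Arguments. Unset Strict Implicit.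
Import Order.TTheory GRing.Theory Num.Theory numFieldNormedType.Exports.
(* Joins the normed-module and completeness structures of real matrices, for [normed_cvg]. *)
HB.instance Definition _ (R : realType) (n m : nat) := NormedModule.on 'M[R]_(n, m).
Local Open Scope classical_set_scope.
Local Open Scope ring_scope.

Section MatrixExponential.
Variable R : realType.

Lemma mx_norm_entry_le m n (M : 'M[R]_(m, n)) i j : `|M i j| <= `|M|.
Proof.
rewrite (_ : `|M| = mx_norm M) // mx_normrE.
by apply/bigmax_geP; right; exists (i, j).
Qed.

Lemma mx_norm_le m n (M : 'M[R]_(m, n)) c :
  0 <= c -> (forall i j, `|M i j| <= c) -> `|M| <= c.
Proof.
move=> c_ge0 le_c; rewrite (_ : `|M| = mx_norm M) // mx_normrE.
by apply/bigmax_leP; split => // -[i j] _; apply: le_c.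
Qed.

Lemma mx_norm_mulmx_le m n p (A : 'M[R]_(m, n)) (B : 'M[R]_(n, p)) :
  `|A *m B| <= n%:R * `|A| * `|B|.
Proof.
apply: mx_norm_le => [|i j]; first by rewrite !mulr_ge0.
rewrite mxE; apply: le_trans (ler_norm_sum _ _ _) _.
have -> : n%:R * `|A| * `|B| = \sum_(k < n) `|A| * `|B|.
  by rewrite sumr_const card_ord -mulrA mulr_natl.
by apply: ler_sum => k _; rewrite normrM ler_pM ?mx_norm_entry_le.
Qed.

Lemma mx_norm_expr_le n (A : 'M[R]_n) k : `|A ^+ k| <= (n%:R * `|A|) ^+ k.
Proof.
elim: k => [|k IHk].
  by apply: mx_norm_le => // i j; rewrite expr0 mxE; case: (i == j); rewrite normr_nat.
rewrite exprS [X in _ <= X]exprS -mulmxE; apply: le_trans (mx_norm_mulmx_le _ _) _.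
by apply: ler_wpM2l; rewrite ?mulr_ge0.
Qed.

Local Notation expmx_term A := (fun k : nat => (k`!%:R)^-1 *: A ^+ k).

Lemma expmx_series_cvg n (A : 'M[R]_n) : cvgn (series (expmx_term A)).
Proof.
apply: normed_cvg; apply: (@series_le_cvg _ _ (exp_coeff (n%:R * `|A|))).
- by move=> k /=.
- by move=> k; apply: exp_coeff_ge0; rewrite mulr_ge0.
- move=> k /=; rewrite normrZ ger0_norm ?invr_ge0 // /exp_coeff /= mulrC.
  by rewrite ler_wpM2r ?invr_ge0 // mx_norm_expr_le.
- exact: is_cvg_series_exp_coeff.
Qed.

Section LeftKernel.
Variables (n : nat) (A : 'M[R]_n) (v : 'rV[R]_n).
Hypothesis vA0 : v *m A = 0.

Lemma left_kernel_expmx_term k : v *m ((k`!%:R)^-1 *: A ^+ k) = (k == 0)%:R *: v.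
Proof.
rewrite -scalemxAr; case: k => [|k].
  by rewrite expr0 fact0 invr1 !scale1r mulmx1.
by rewrite exprS -mulmxE mulmxA vA0 mul0mx scaler0 scale0r.
Qed.

Lemma left_kernel_series k : v *m series (expmx_term A) k.+1 = v.
Proof.
rewrite /series /= mulmx_sumr big_nat_recl //= big1 => [|i _].
  by rewrite left_kernel_expmx_term scale1r addr0.
by rewrite left_kernel_expmx_term scale0r.
Qed.

Lemma left_kernel_expmx : v *m expmx A = v.
Proof.
apply/rowP => j; rewrite mxE.
have to_lim : \sum_i v 0 i * series (expmx_term A) k i j @[k --> \oo] -->
              \sum_i v 0 i * expmx A i j.
  apply: (cvg_big (op := +%R)) => [|i _]; first exact: add_continuous.
  apply: cvgMl_tmp; apply: (cvg_comp _ (fun M : 'M[R]_n => M i j) (@expmx_series_cvg _ A)).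
  exact: coord_continuous.
have to_v : \sum_i v 0 i * series (expmx_term A) k i j @[k --> \oo] --> v 0 j.
  apply: cvg_near_cst; near=> k.
  have [k' ->] : exists k', k = k'.+1 by exists k.-1; rewrite prednK //; near: k; exists 1%N.
  by move: (left_kernel_series k') => /rowP/(_ j); rewrite mxE.
exact: cvg_unique to_lim to_v.
Unshelve. all: by end_near.
Qed.

End LeftKernel.
End MatrixExponential.

Section Laplacian.
Variables (R : realType) (n : nat) (w : 'M[R]_n) (r : R).
Hypothesis w_sym : forall i j, w i j = w j i.
Hypothesis w_ge0 : forall i j, 0 <= w i j.

Definition vertex_weights : 'rV[R]_n := \row_i deg w i `^ r.

Lemma deg_powR_mul_laplacian i j :
  deg w i `^ r * laplacian w r i j = (i == j)%:R * deg w i - w i j.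
Proof.
rewrite mxE; have [d0|d_neq0] := eqVneq (deg w i `^ r) 0; last first.
  by rewrite mulrA mulfV // mul1r.
have wi0 k : w i k = 0.
  by move/powR_eq0_eq0/psumr_eq0P: d0 => -> // k' _; apply: w_ge0.
by rewrite d0 mul0r (powR_eq0_eq0 d0) wi0 mulr0 subr0.
Qed.

Lemma vertex_weights_laplacian : vertex_weights *m laplacian w r = 0.
Proof.
apply/rowP => j; rewrite !mxE.
under eq_bigr do rewrite mxE deg_powR_mul_laplacian.
rewrite sumrB (bigD1 j) //= eqxx mul1r big1 => [|i /negPf ->]; last by rewrite mul0r.
by rewrite addr0 /deg; under eq_bigr do rewrite w_sym; rewrite subrr.
Qed.

Lemma vertex_weights_heat_kernel tau :
  vertex_weights *m expmx (- tau *: laplacian w r) = vertex_weights.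
Proof. by apply: left_kernel_expmx; rewrite -scalemxAr vertex_weights_laplacian scaler0. Qed.

Lemma mass_heat tau u : mass w r (heat w r tau u) = mass w r u.
Proof.
rewrite /mass /ip /heat /one_fn.
under eq_bigr do rewrite mulr1 mulr_suml.
rewrite exchange_big /=; apply: eq_bigr => j _.
move: vertex_weights_heat_kernel => /(_ tau)/rowP/(_ j); rewrite !mxE => <-.
rewrite mulr1 mulr_sumr; apply: eq_bigr => i _; rewrite mxE; ring.
Qed.

End Laplacian.

Ltac merge_sums := repeat (rewrite -sumrB || rewrite -big_split /=).

Section MBOEnergy.
Variables (R : realType) (n : nat) (w : 'M[R]_n) (r : R).

Definition mbo_energy (lam : R) (h u : 'I_n -> R) : R :=
  lam * ip w r u (fun i => 1 - u i) + sqnorm w r (fun i => u i - h i).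

Lemma mbo_energyE lam h u : mbo_energy lam h u =
  (1 - lam) * sqnorm w r u - 2 * ip w r u h + (lam * mass w r u + sqnorm w r h).
Proof.
apply/eqP; rewrite -subr_eq0; apply/eqP.
rewrite /mbo_energy /sqnorm /mass /ip /one_fn !mulr_sumr; merge_sums.
by apply: big1 => i _; ring.
Qed.

(* Also when the total weight is zero and [bar] divides by zero: then every vertex weight vanishes. *)
Lemma mulr_bar_mass u : bar w r u * mass w r (@one_fn R n) = mass w r u.
Proof.
have [M0|M_neq0] := eqVneq (mass w r (@one_fn R n)) 0; last by rewrite divfK.
have d0 i : deg w i `^ r = 0.
  move: M0; rewrite /mass /ip /one_fn; under eq_bigr do rewrite !mul1r.
  by move/psumr_eq0P => -> // k _; apply: powR_ge0.
by rewrite M0 mulr0 /mass /ip big1 // => i _; rewrite d0 mulr0.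
Qed.

Lemma inB_mulr_subr_ge0 (u1 beta u : 'I_n -> R) i :
  inB u1 beta -> in01 u -> 0 <= beta i * (u i - u1 i).
Proof.
case=> /(_ i)/andP[u1_ge0 u1_le1] /(_ i)[beta_ge0 [beta0 beta_le0]] /(_ i)/andP[u_ge0 u_le1].
have [u1_0|u1_neq0] := eqVneq (u1 i) 0.
  by rewrite u1_0 subr0 mulr_ge0 // beta_ge0.
have [u1_1|u1_neq1] := eqVneq (u1 i) 1.
  by rewrite u1_1 mulr_le0 ?subr_le0 // beta_le0.
by rewrite beta0 ?mul0r // !lt_neqAle eq_sym u1_neq0 u1_ge0 u1_neq1 u1_le1.
Qed.

Section Update.
Variables (lam : R) (h u1 beta : 'I_n -> R).
Hypothesis update_eq : forall i,
  u1 i - h i - lam * u1 i + lam * bar w r u1 = lam * beta i - lam * bar w r beta.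

Let hE i : h i = u1 i - lam * u1 i + lam * bar w r u1 - lam * beta i + lam * bar w r beta.
Proof. by have := update_eq i; lra. Qed.

Lemma mass_update : mass w r u1 = mass w r h.
Proof.
suff : mass w r u1 - mass w r h - lam * mass w r u1
    + lam * (bar w r u1 * mass w r (@one_fn R n))
    - (lam * mass w r beta - lam * (bar w r beta * mass w r (@one_fn R n))) = 0.
  by rewrite !mulr_bar_mass; lra.
rewrite /mass /ip /one_fn !mulr_sumr; merge_sums.
by apply: big1 => i _; rewrite hE; ring.
Qed.

(* By [update_eq], [h - (1 - lam) u1] is [-lam beta] up to a constant function. *)
Lemma mbo_energy_subE u :
  mbo_energy lam h u - mbo_energy lam h u1 =
    \sum_i deg w i `^ r * ((1 - lam) * (u i - u1 i) ^+ 2 + 2 * lam * (beta i * (u i - u1 i)))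
    + (lam - 2 * lam * (bar w r u1 + bar w r beta)) * (mass w r u - mass w r u1).
Proof.
apply/eqP; rewrite -subr_eq0; apply/eqP.
rewrite /mbo_energy /sqnorm /mass /ip /one_fn !mulr_sumr; merge_sums.
by rewrite mulr_sumr; merge_sums; apply: big1 => i _; rewrite hE; ring.
Qed.

Lemma update_minimises_mbo_energy u : 0 <= lam <= 1 -> inB u1 beta ->
  in01 u -> mass w r u = mass w r u1 -> mbo_energy lam h u1 <= mbo_energy lam h u.
Proof.
move=> /andP[lam_ge0 lam_le1] u1_beta u01 Mu.
suff : 0 <= mbo_energy lam h u - mbo_energy lam h u1 by rewrite subr_ge0.
rewrite mbo_energy_subE Mu subrr mulr0 addr0.
apply: sumr_ge0 => i _; rewrite mulr_ge0 ?powR_ge0 // addr_ge0 //.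
  by rewrite mulr_ge0 ?sqr_ge0 ?subr_ge0.
by apply: mulr_ge0; [rewrite mulr_ge0 | apply: inB_mulr_subr_ge0].
Qed.

End Update.

Lemma ip_1_sub_mul2 h v :
  ip w r (fun i => 1 - 2 * h i) v = mass w r v - 2 * ip w r v h.
Proof.
apply/eqP; rewrite -subr_eq0; apply/eqP.
rewrite /mass /ip /one_fn !mulr_sumr; merge_sums.
by apply: big1 => i _; ring.
Qed.

Lemma MBO_update_of_argmax tau un u1 : admissible w r un u1 ->
  (forall u, admissible w r un u -> ip w r u (heat w r tau un) <= ip w r u1 (heat w r tau un)) ->
  MBO_update w r tau un u1.
Proof.
move=> adm1 u1_max; split=> // u adm; rewrite !ip_1_sub_mul2.
case: (adm) => _ ->; case: adm1 => _ ->.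
by rewrite lerD2l lerN2 ler_pM2l // u1_max.
Qed.

End MBOEnergy.

Theorem theorem13 (R : realType) (n : nat) (w : 'M[R]_n) (r eps tau : R)
  (un u1 beta : 'I_n -> R) :
  (0 < n)%N -> weighted_graph w -> 0 <= r <= 1 -> 0 < eps -> 0 <= tau <= eps ->
  in01 un -> inB u1 beta ->
  (forall i, u1 i - heat w r tau un i - tau / eps * u1 i + tau / eps * bar w r u1
             = tau / eps * beta i - tau / eps * bar w r beta) ->
  let lam := tau / eps in
  let F := fun u : 'I_n -> R =>
    lam * ip w r u (fun i => 1 - u i) + sqnorm w r (fun i => u i - heat w r tau un i) in
  [/\ admissible w r un u1 /\ (forall u, admissible w r un u -> F u1 <= F u),
      (exists C : R, forall u, admissible w r un u ->
          F u = (1 - lam) * sqnorm w r u - 2 * ip w r u (heat w r tau un) + C)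
    & (tau = eps ->
         (forall u, admissible w r un u -> ip w r u (heat w r tau un) <= ip w r u1 (heat w r tau un))
         /\ MBO_update w r tau un u1)].
Proof.
move=> _ [w_sym [w_ge0 _]] _ eps_gt0 /andP[tau_ge0 tau_le] _ u1_beta update_eq lam F.
have lam01 : 0 <= lam <= 1 by rewrite /lam divr_ge0 ?(ltW eps_gt0) //= ler_pdivrMr // mul1r.
have mass_u1 : mass w r u1 = mass w r un.
  by rewrite (mass_update update_eq) (mass_heat r w_sym w_ge0).
have adm1 : admissible w r un u1 by split=> //; case: u1_beta.
have F_min u : admissible w r un u -> F u1 <= F u.
  by case=> u01 Mu; apply: (update_minimises_mbo_energy update_eq) => //; rewrite Mu.
pose C := lam * mass w r un + sqnorm w r (heat w r tau un).
have FE u : admissible w r un u ->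
    F u = (1 - lam) * sqnorm w r u - 2 * ip w r u (heat w r tau un) + C.
  by case=> _ Mu; rewrite /C -Mu; apply: mbo_energyE.
split=> //; first by exists C.
move=> tau_eps; have lam1 : lam = 1 by rewrite /lam tau_eps divff ?gt_eqF.
have u1_max u : admissible w r un u ->
    ip w r u (heat w r tau un) <= ip w r u1 (heat w r tau un).
  by move=> adm; move: (F_min u adm); rewrite (FE u adm) (FE u1 adm1) lam1 subrr !mul0r; lra.
by split=> //; apply: MBO_update_of_argmax.
Qed.
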